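(* Let $C$ be a consistent conjunctive transition formula of dimension $n$. Then $\hat\alpha(C)$ is a $\mathbb{Q}$-VASR abstraction of $C$ (i.e., if $\hat\alpha(C)=(S,V)$ then $C\Vdash_S V$). If moreover $C$ is expressed in $\exists$LRA, then $\hat\alpha(C)$ is a best $\mathbb{Q}$-VASR abstraction of $C$.
   Context: $\exists$LIRA formulas are built from atoms $s<t$, $s=t$ over linear terms with rational coefficients using $\land,\lor,\exists x\in\mathbb{Q},\exists x\in\mathbb{Z}$; $\exists$LRA omits quantification over $\mathbb{Z}$. A transition formula of dimension $n$ is a formula $F(\vec x,\vec x')$ with free variables $x_1,\dots,x_n,x_1',\dots,x_n'$, defining the transition system on $\mathbb{Q}^n$ with $\vec u\to_F\vec v$ iff $F(\vec u,\vec v)$ holds. A conjunctive transition formula is one that is a conjunction of atoms (possibly with additional existentially quantified variables); consistent means satisfiable. A $\mathbb{Q}$-VASR of dimension $d$ is a finite set $V\subseteq\{0,1\}^d\times\mathbb{Q}^d$; $\vec u\to_V\vec v$ iff $\vec v=\vec r*\vec u+\vec a$ for some $(\vec r,\vec a)\in V$ ($*$ pointwise product). A linear simulation $A\Vdash_S B$ between transition systems on $\mathbb{Q}^n$ and $\mathbb{Q}^m$ is $S\in\mathbb{Q}^{m\times n}$ with $\vec u\to_A\vec v\Rightarrow S\vec u\to_B S\vec v$. A $\mathbb{Q}$-VASR abstraction is a pair $(S,V)$ with $S\in\mathbb{Q}^{d\times n}$ and $V$ a $d$-dimensional $\mathbb{Q}$-VASR; it is an abstraction of $F$ if $F\Vdash_SV$.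 $(S^1,V^1)\preceq(S^2,V^2)$ iff there is a matrix $T$ with $V^1\Vdash_TV^2$ and $TS^1=S^2$. A best $\mathbb{Q}$-VASR abstraction of $F$ is an abstraction of $F$ that is $\preceq$ every $\mathbb{Q}$-VASR abstraction of $F$. $\hat\alpha(C)$: let $\mathit{Res}_C=\{(\vec s,a)\in\mathbb{Q}^n\times\mathbb{Q}: C\models\vec s\cdot\vec x'=a\}$ and $\mathit{Inc}_C=\{(\vec s,a): C\models\vec s\cdot\vec x'=\vec s\cdot\vec x+a\}$ (both vector spaces). With chosen bases $(\vec s_1,a_1),\dots,(\vec s_m,a_m)$ of $\mathit{Res}_C$ and $(\vec s_{m+1},a_{m+1}),\dots,(\vec s_d,a_d)$ of $\mathit{Inc}_C$, $\hat\alpha(C)=(S,\{(\vec r,\vec a)\})$ where $S\in\mathbb{Q}^{d\times n}$ has rows $\vec s_1,\dots,\vec s_d$, $\vec r$ consists of $m$ zeros followed by $d-m$ ones, and $\vec a=(a_1,\dots,a_d)$. *)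

From HB Require Import structures.
From mathcomp Require Import all_boot all_order all_algebra.
From Stdlib Require List.
Set Implicit Arguments. Unset Strict Implicit. Unset Printing Implicit Defensive.
Import Order.TTheory GRing.Theory Num.Theory.
Local Open Scope ring_scope.

Definition tsys (n : nat) := 'cV[rat]_n -> 'cV[rat]_n -> Prop.

Definition lin_simulation (n m : nat) (A : tsys n) (S : 'M[rat]_(m, n))
    (B : tsys m) : Prop :=
  forall u v, A u v -> B (S *m u) (S *m v).

(* An atom over the variables x (n of them), x' (n of them) and
   k auxiliary (existentially quantified) variables y:
      cx.x + cx'.x' + cy.y + c  < 0   (if strict)
      cx.x + cx'.x' + cy.y + c  = 0   (otherwise).
   Every atom s < t or s = t between linear terms with rational
   coefficients is (equivalent to) such an atom, with t - s moved left. *)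
Record atom (n k : nat) := Atom {
  at_x  : 'rV[rat]_n;
  at_x' : 'rV[rat]_n;
  at_y  : 'rV[rat]_k;
  at_c  : rat;
  at_strict : bool }.

Definition atom_holds (n k : nat) (a : atom n k)
    (u v : 'cV[rat]_n) (w : 'cV[rat]_k) : Prop :=
  let t := (at_x a *m u + at_x' a *m v + at_y a *m w) 0 0 + at_c a in
  (if at_strict a then t < 0 else t == 0) : bool.

Record ctf (n k : nat) := CTF {
  ctf_int   : 'I_k -> bool;
  ctf_atoms : seq (atom n k) }.

Definition ctf_sem (n k : nat) (C : ctf n k) : tsys n :=
  fun u v => exists w : 'cV[rat]_k,
    (forall i : 'I_k, ctf_int C i -> exists z : int, w i 0 = z%:~R) /\
    (forall a, Stdlib.Lists.List.In a (ctf_atoms C) -> atom_holds a u v w).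

Definition ctf_is_LRA (n k : nat) (C : ctf n k) : Prop :=
  forall i : 'I_k, ctf_int C i = false.

Definition consistent (n k : nat) (C : ctf n k) : Prop :=
  exists u v, ctf_sem C u v.

Definition vasr (d : nat) := seq ('cV[bool]_d * 'cV[rat]_d).

Definition vasr_sem (d : nat) (V : vasr d) : tsys d :=
  fun u v => exists r a, (r, a) \in V /\
    v = \col_i ((nat_of_bool (r i 0))%:R * u i 0 + a i 0).

Definition vasr_abstraction_of (n d : nat) (F : tsys n)
    (S : 'M[rat]_(d, n)) (V : vasr d) : Prop :=
  lin_simulation F S (vasr_sem V).

Definition vasr_abs_le (n d1 d2 : nat) (S1 : 'M[rat]_(d1, n)) (V1 : vasr d1)
    (S2 : 'M[rat]_(d2, n)) (V2 : vasr d2) : Prop :=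
  exists T : 'M[rat]_(d2, d1),
    lin_simulation (vasr_sem V1) T (vasr_sem V2) /\ T *m S1 = S2.

Definition best_vasr_abstraction_of (n d : nat) (F : tsys n)
    (S : 'M[rat]_(d, n)) (V : vasr d) : Prop :=
  vasr_abstraction_of F S V /\
  forall (d' : nat) (S' : 'M[rat]_(d', n)) (V' : vasr d'),
    vasr_abstraction_of F S' V' -> vasr_abs_le S V S' V'.

Definition Res (n k : nat) (C : ctf n k) (s : 'rV[rat]_n) (a : rat) : Prop :=
  forall u v, ctf_sem C u v -> s *m v = a%:M.

Definition Inc (n k : nat) (C : ctf n k) (s : 'rV[rat]_n) (a : rat) : Prop :=
  forall u v, ctf_sem C u v -> s *m v = s *m u + a%:M.

(* The pairs (row i B, c i) for i < m form a basis of the subspace P of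
   Q^n x Q (vectors (s,a) identified with the row vector [s a]):
   they are linearly independent, lie in P, and span P. *)
Definition is_basis_of (n m : nat) (P : 'rV[rat]_n -> rat -> Prop)
    (B : 'M[rat]_(m, n)) (c : 'cV[rat]_m) : Prop :=
  [/\ row_free (row_mx B c),
      forall i : 'I_m, P (row i B) (c i 0)
    & forall s a, P s a -> (row_mx s (a%:M : 'M[rat]_1) <= row_mx B c)%MS].

(* alpha-hat(C) = (S, {(r, a)}), where S has rows s_1..s_m (basis of Res_C)
   followed by s_{m+1}..s_d (basis of Inc_C), r = (0,..,0,1,..,1) and
   a = (a_1, .., a_d). *)
Definition alpha_hat_S (n m p : nat) (S1 : 'M[rat]_(m, n)) (S2 : 'M[rat]_(p, n))
  : 'M[rat]_(m + p, n) := col_mx S1 S2.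

Definition alpha_hat_V (m p : nat) (a1 : 'cV[rat]_m) (a2 : 'cV[rat]_p)
  : vasr (m + p) :=
  [:: (col_mx (const_mx false) (const_mx true), col_mx a1 a2)].

(* Every row of [S] satisfies [s.x' = a] or [s.x' = s.x + a] on all
   transitions of [C], so [(S, V)] simulates [C].  For optimality over LRA:
   the transition relation of [C] is convex, while the transitions simulated by
   a single step [(r, a)] of another abstraction [(S', V')] form an affine set.
   A convex set covered by finitely many affine sets lies in one of them, so one
   step [(r, a)] of [V'] simulates all of [C].  Each row of [S'] then lies in
   [Res_C] or in [Inc_C] according to [r], hence is a combination of the
   corresponding basis rows of [S]; these coefficients form the matrix [T]. *)
From HB Require Import structures.
From mathcomp Require Import all_boot all_order all_algebra.
From mathcomp Require Import ring lra.
From Stdlib Require Import Classical.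
Set Implicit Arguments. Unset Strict Implicit. Unset Printing Implicit Defensive.
Import Order.TTheory GRing.Theory Num.Theory.
Local Open Scope ring_scope.

Lemma nat_pigeonhole (N : nat) (f : nat -> nat) :
  (forall k, f k < N)%N -> exists a b, a != b /\ f a = f b.
Proof.
move=> f_lt; pose g (k : 'I_N.+1) : 'I_N := Ordinal (f_lt k).
have /injectivePn [a [b ab /(congr1 val) gab]] : ~~ injectiveb g.
  by apply/injectiveP => /leq_card; rewrite !card_ord ltnn.
by exists (val a), (val b).
Qed.

Section Convexity.
Variables (R : numFieldType) (V : lmodType R).

Definition comb (s : R) (x y : V) : V := (1 - s) *: x + s *: y.

Definition convex (P : V -> Prop) :=
  forall s x y, 0 <= s <= 1 -> P x -> P y -> P (comb s x y).

Definition affine_closed (L : pred V) :=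
  forall s x y, L x -> L y -> L (comb s x y).

Lemma comb0 (x y : V) : comb 0 x y = x.
Proof. by rewrite /comb subr0 scale1r scale0r addr0. Qed.

Lemma comb1 (x y : V) : comb 1 x y = y.
Proof. by rewrite /comb subrr scale0r scale1r add0r. Qed.

Lemma comb_comb (c s t : R) (x y : V) :
  comb c (comb s x y) (comb t x y) = comb ((1 - c) * s + c * t) x y.
Proof.
rewrite /comb !scalerDr !scalerA addrACA -!scalerDl.
by congr (_ *: _ + _ *: _); ring.
Qed.

Lemma affine_closed_extend (L : pred V) (t : R) (x y : V) :
  affine_closed L -> t != 0 -> L x -> L (comb t x y) -> L y.
Proof.
move=> affL t0 Lx Lxy; have := affL t^-1 _ _ Lx Lxy.
by rewrite -{1}(comb0 x y) comb_comb mulr0 add0r mulVf // comb1.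
Qed.

Lemma affine_closed_retract (L : pred V) (s t : R) (x y : V) :
  affine_closed L -> s != t -> L (comb s x y) -> L (comb t x y) -> L x.
Proof.
move=> affL st Ls Lt; have := affL (s / (s - t)) _ _ Ls Lt.
rewrite comb_comb -[X in _ -> L X](comb0 x y); congr (L (comb _ _ _)).
by field; rewrite subr_eq0.
Qed.

Section AffineCover.
Variables (I : eqType) (L : I -> pred V) (P : V -> Prop).
Hypotheses (convP : convex P) (affL : forall i, affine_closed (L i)).

(* The points [comb (k.+1)^-1 x q] of the segment from [x] to [q] all avoid
   [L w]; two of them share a cover in [W], which then contains [x]. *)
Lemma affine_cover_drop (w : I) (W : seq I) (q : V) :
  (forall x, P x -> has (L^~ x) (w :: W)) -> P q -> ~~ L w q ->
  forall x, P x -> has (L^~ x) W.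
Proof.
move=> cover Pq Lwq x Px; apply: contraT => notW.
have Lwx : L w x by have := cover x Px; rewrite /= (negbTE notW) orbF.
pose t (k : nat) : R := (k.+1)%:R^-1.
pose y k := comb (t k) x q.
have t_neq0 k : t k != 0 by rewrite invr_eq0 pnatr_eq0.
have t_inj a b : a != b -> t a != t b.
  by apply: contraNneq => /invr_inj/eqP; rewrite eqr_nat eqSS.
have Py k : P (y k).
  apply: convP => //; rewrite invr_ge0 ler0n invf_le1 ?ltr0Sn //.
  by rewrite ler1n.
have coverW k : has (L^~ (y k)) W.
  have /orP [Lwy|//] := cover _ (Py k).
  by case/negP: Lwq; exact: affine_closed_extend (@affL w) (t_neq0 k) Lwx Lwy.
pose f k := find (L^~ (y k)) W.
have f_lt k : (f k < size W)%N by rewrite -has_find.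
have [a [b [ab fab]]] := nat_pigeonhole f_lt.
pose i := nth w W (f a).
have Lia : L i (y a) by exact: nth_find (coverW a).
have Lib : L i (y b) by rewrite /i fab; exact: nth_find (coverW b).
have iW : i \in W by rewrite mem_nth // -has_find.
have /negP[] := hasPn notW i iW.
exact: affine_closed_retract (@affL i) (t_inj _ _ ab) Lia Lib.
Qed.

Lemma convex_affine_cover (W : seq I) :
  (exists x, P x) -> (forall x, P x -> has (L^~ x) W) ->
  exists2 i, i \in W & forall x, P x -> L i x.
Proof.
move=> P0; elim: W => [|w W IH] cover; first by case: P0 => x /cover.
case: (classic (exists2 q, P q & ~~ L w q)) => [[q Pq Lwq]|noq].
  have [i iW Li] := IH (affine_cover_drop cover Pq Lwq).
  by exists i; rewrite // in_cons iW orbT.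
exists w; rewrite ?mem_head // => x Px.
by apply/negPn/negP => Lwx; apply: noq; exists x.
Qed.
End AffineCover.
End Convexity.

Lemma mulmx_comb (R : numFieldType) (d n c : nat) (A : 'M[R]_(d, n)) (s : R)
    (x y : 'M[R]_(n, c)) :
  A *m comb s x y = comb s (A *m x) (A *m y).
Proof. by rewrite /comb mulmxDr -!scalemxAr. Qed.

Lemma mulmx_row_entry (R : pzSemiRingType) (a b c : nat) (A : 'M[R]_(a, b))
    (B : 'M[R]_(b, c)) i j :
  (A *m B) i j = (row i A *m B) 0 j.
Proof. by rewrite -row_mul [RHS]mxE. Qed.

Lemma scalar_mx11 (R : pzSemiRingType) (a : R) : (a%:M : 'M[R]_1) 0 0 = a.
Proof. by rewrite mxE eqxx mulr1n. Qed.

Lemma mx11_eq (T : Type) (A B : 'M[T]_1) : A 0 0 = B 0 0 -> A = B.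
Proof. by move=> AB; apply/matrixP => i j; rewrite !ord1. Qed.

Section ConjunctiveFormulas.
Variables (n k : nat).

Definition atom_value (a : atom n k) (u v : 'cV[rat]_n) (w : 'cV[rat]_k) : rat :=
  (at_x a *m u + at_x' a *m v + at_y a *m w) 0 0 + at_c a.

Lemma atom_value_comb (a : atom n k) (s : rat) (u1 u2 v1 v2 : 'cV[rat]_n)
    (w1 w2 : 'cV[rat]_k) :
  atom_value a (comb s u1 u2) (comb s v1 v2) (comb s w1 w2) =
  (1 - s) * atom_value a u1 v1 w1 + s * atom_value a u2 v2 w2.
Proof. by rewrite /atom_value !mulmx_comb /comb !mxE; ring. Qed.

Lemma atom_holds_comb (a : atom n k) (s : rat) (u1 u2 v1 v2 : 'cV[rat]_n)
    (w1 w2 : 'cV[rat]_k) :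
  0 <= s <= 1 -> atom_holds a u1 v1 w1 -> atom_holds a u2 v2 w2 ->
  atom_holds a (comb s u1 u2) (comb s v1 v2) (comb s w1 w2).
Proof.
rewrite /atom_holds -!/(atom_value _ _ _ _) atom_value_comb => /andP[s0 s1].
case: (at_strict a) => /=; first by move=> h1 h2; nra.
by move=> /eqP-> /eqP->; rewrite !mulr0 addr0.
Qed.

Lemma ctf_sem_convex (C : ctf n k) :
  ctf_is_LRA C -> convex (fun x : 'cV[rat]_n * 'cV[rat]_n => ctf_sem C x.1 x.2).
Proof.
move=> LRA s [u1 v1] [u2 v2] s01 [w1 [_ H1]] [w2 [_ H2]].
exists (comb s w1 w2); split=> [i|a inC]; first by rewrite LRA.
exact: atom_holds_comb (H1 a inC) (H2 a inC).
Qed.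

End ConjunctiveFormulas.

Definition vasr_update (d : nat) (r : 'cV[bool]_d) (a u : 'cV[rat]_d) : 'cV[rat]_d :=
  \col_i ((r i 0)%:R * u i 0 + a i 0).

Lemma vasr_update_comb (d : nat) (r : 'cV[bool]_d) (a : 'cV[rat]_d) (s : rat)
    (u1 u2 : 'cV[rat]_d) :
  vasr_update r a (comb s u1 u2) = comb s (vasr_update r a u1) (vasr_update r a u2).
Proof. by apply/matrixP => i j; rewrite /comb !mxE; ring. Qed.

Definition simulates_step (n d : nat) (S : 'M[rat]_(d, n))
    (ra : 'cV[bool]_d * 'cV[rat]_d) : pred ('cV[rat]_n * 'cV[rat]_n) :=
  fun x => S *m x.2 == vasr_update ra.1 ra.2 (S *m x.1).

Lemma simulates_step_affine (n d : nat) (S : 'M[rat]_(d, n)) ra :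
  affine_closed (simulates_step S ra).
Proof.
move=> s [u1 v1] [u2 v2] /eqP h1 /eqP h2; apply/eqP.
by rewrite /= !mulmx_comb h1 h2 vasr_update_comb.
Qed.

Lemma abstraction_single_step (n k d : nat) (C : ctf n k) (S : 'M[rat]_(d, n))
    (V : vasr d) :
  ctf_is_LRA C -> consistent C -> vasr_abstraction_of (ctf_sem C) S V ->
  exists2 ra, ra \in V &
    forall u v, ctf_sem C u v -> S *m v = vasr_update ra.1 ra.2 (S *m u).
Proof.
move=> LRA [u [v uv]] abs.
have [[x y] /=|ra raV sim] := convex_affine_cover (ctf_sem_convex LRA)
  (@simulates_step_affine n d S) (ex_intro _ (u, v) uv) (W := V).
- move=> /abs [r [a [raV Sy]]].
  by apply/hasP; exists (r, a) => //; exact/eqP.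
- by exists ra => // u' v' /(sim (u', v'))/eqP.
Qed.

Lemma is_basis_of_span (n m : nat) (P : 'rV[rat]_n -> rat -> Prop)
    (B : 'M[rat]_(m, n)) (c : 'cV[rat]_m) (s : 'rV[rat]_n) (a : rat) :
  is_basis_of P B c -> P s a -> exists D : 'rV[rat]_m, s = D *m B /\ a%:M = D *m c.
Proof.
case=> _ _ span /span/mulmxKpV; set D := _ *m pinvmx _.
by rewrite mul_mx_row => /eq_row_mx[sD aD]; exists D.
Qed.

Section TransitionInvariants.
Variables (n k : nat) (C : ctf n k).

Lemma Res_mx (q : nat) (B : 'M[rat]_(q, n)) (c : 'cV[rat]_q) :
  (forall i, Res C (row i B) (c i 0)) ->
  forall u v, ctf_sem C u v -> B *m v = c.
Proof.
move=> ResB u v uv; apply/row_matrixP => i.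
by rewrite row_mul (ResB i u v uv); apply: mx11_eq; rewrite scalar_mx11 mxE.
Qed.

Lemma Inc_mx (q : nat) (B : 'M[rat]_(q, n)) (c : 'cV[rat]_q) :
  (forall i, Inc C (row i B) (c i 0)) ->
  forall u v, ctf_sem C u v -> B *m v = B *m u + c.
Proof.
move=> IncB u v uv; apply/row_matrixP => i.
rewrite row_mul (IncB i u v uv) linearD /= row_mul; congr (_ + _).
by apply: mx11_eq; rewrite scalar_mx11 mxE.
Qed.

Variables (d : nat) (S : 'M[rat]_(d, n)) (r : 'cV[bool]_d) (a : 'cV[rat]_d).
Hypothesis step : forall u v, ctf_sem C u v -> S *m v = vasr_update r a (S *m u).

Lemma Res_row_of_step i : r i 0 = false -> Res C (row i S) (a i 0).
Proof.
move=> ri u v /step Sv; apply: mx11_eq.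
by rewrite -row_mul Sv [LHS]mxE /vasr_update mxE ri mul0r add0r scalar_mx11.
Qed.

Lemma Inc_row_of_step i : r i 0 = true -> Inc C (row i S) (a i 0).
Proof.
move=> ri u v /step Sv; apply: mx11_eq.
rewrite -row_mul Sv [LHS]mxE /vasr_update mxE ri mul1r mulmx_row_entry.
by rewrite [RHS]mxE scalar_mx11.
Qed.

End TransitionInvariants.

Section AlphaHat.
Variables (n k m p : nat) (C : ctf n k).
Variables (S1 : 'M[rat]_(m, n)) (a1 : 'cV[rat]_m).
Variables (S2 : 'M[rat]_(p, n)) (a2 : 'cV[rat]_p).

Lemma vasr_sem_alpha_hat_V (x y : 'cV[rat]_(m + p)) :
  vasr_sem (alpha_hat_V a1 a2) x y <-> y = col_mx a1 (dsubmx x + a2).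
Proof.
have upd : vasr_update (col_mx (const_mx false) (const_mx true)) (col_mx a1 a2) x
           = col_mx a1 (dsubmx x + a2).
  apply/matrixP => i j; rewrite ord1 mxE.
  case: (split_ordP i) => i' ->; rewrite !(col_mxEu, col_mxEd) ?mxE /=.
  - by rewrite mul0r add0r.
  - by rewrite mul1r.
split=> [[r [a [ra ->]]] | ->].
  by move: ra; rewrite mem_seq1 => /eqP[-> ->].
by exists (col_mx (const_mx false) (const_mx true)), (col_mx a1 a2); rewrite mem_head.
Qed.

Lemma alpha_hat_abstraction :
  (forall i, Res C (row i S1) (a1 i 0)) -> (forall i, Inc C (row i S2) (a2 i 0)) ->
  vasr_abstraction_of (ctf_sem C) (alpha_hat_S S1 S2) (alpha_hat_V a1 a2).
Proof.
move=> ResS1 IncS2 u v uv; apply/vasr_sem_alpha_hat_V.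
by rewrite /alpha_hat_S !mul_col_mx col_mxKd (Res_mx ResS1 uv) (Inc_mx IncS2 uv).
Qed.

Hypotheses (basisRes : is_basis_of (Res C) S1 a1)
           (basisInc : is_basis_of (Inc C) S2 a2).

Lemma alpha_hat_row_factor (s : 'rV[rat]_n) (b : bool) (a : rat) :
  (if b then Inc C s a else Res C s a) ->
  exists D : 'rV[rat]_(m + p), s = D *m alpha_hat_S S1 S2 /\
    forall x, (D *m col_mx a1 (dsubmx x + a2)) 0 0 = b%:R * (D *m x) 0 0 + a.
Proof.
case: b => [/(is_basis_of_span basisInc) | /(is_basis_of_span basisRes)] [D [sD aD]].
- exists (row_mx 0 D); rewrite mul_row_col mul0mx add0r; split=> // x.
  rewrite mul_row_col mul0mx add0r mulmxDr -aD -{2}(vsubmxK x) mul_row_col.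
  by rewrite mul0mx add0r mxE scalar_mx11 mul1r.
- exists (row_mx D 0); rewrite mul_row_col mul0mx addr0; split=> // x.
  by rewrite mul_row_col mul0mx addr0 -aD scalar_mx11 mul0r add0r.
Qed.

Lemma alpha_hat_factor (d : nat) (S : 'M[rat]_(d, n)) (r : 'cV[bool]_d)
    (a : 'cV[rat]_d) :
  (forall u v, ctf_sem C u v -> S *m v = vasr_update r a (S *m u)) ->
  exists T : 'M[rat]_(d, m + p), T *m alpha_hat_S S1 S2 = S /\
    forall x, T *m col_mx a1 (dsubmx x + a2) = vasr_update r a (T *m x).
Proof.
move=> step.
have rowD i : exists D : 'rV[rat]_(m + p), row i S = D *m alpha_hat_S S1 S2 /\
    forall x, (D *m col_mx a1 (dsubmx x + a2)) 0 0 = (r i 0)%:R * (D *m x) 0 0 + a i 0.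
  apply: alpha_hat_row_factor; case ri: (r i 0).
  - exact (Inc_row_of_step step ri).
  - exact (Res_row_of_step step ri).
have [D DP] := fin_all_exists rowD.
exists (\matrix_i D i); split.
  by apply/row_matrixP => i; rewrite row_mul rowK (DP i).1.
move=> x; apply/matrixP => i j.
rewrite ord1 mulmx_row_entry rowK (DP i).2 /vasr_update [RHS]mxE.
by rewrite [in RHS]mulmx_row_entry rowK.
Qed.

End AlphaHat.

Theorem proposition1 (n k : nat) (C : ctf n k) (m p : nat)
    (S1 : 'M[rat]_(m, n)) (a1 : 'cV[rat]_m)
    (S2 : 'M[rat]_(p, n)) (a2 : 'cV[rat]_p) :
  consistent C ->
  is_basis_of (Res C) S1 a1 ->
  is_basis_of (Inc C) S2 a2 ->
  vasr_abstraction_of (ctf_sem C) (alpha_hat_S S1 S2) (alpha_hat_V a1 a2) /\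
  (ctf_is_LRA C ->
   best_vasr_abstraction_of (ctf_sem C) (alpha_hat_S S1 S2) (alpha_hat_V a1 a2)).
Proof.
move=> consC basisRes basisInc.
have [[_ ResS1 _] [_ IncS2 _]] := (basisRes, basisInc).
split=> [|LRA]; first exact: alpha_hat_abstraction.
split=> [|d S V absV]; first exact: alpha_hat_abstraction.
have [[r a] raV step] := abstraction_single_step LRA consC absV.
have [T [TS Tstep]] := alpha_hat_factor basisRes basisInc step.
exists T; split=> // x y /vasr_sem_alpha_hat_V ->.
by exists r, a; rewrite Tstep.
Qed.
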